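(* Let $p$ be an odd prime, $i$ an integer with $1\leq i\leq p-1$, and $k\geq1$ an integer. Then for every integer $l\geq k$, $v_p\left(\frac{k!}{l!}{l \brace k}_{\leq i}\right)\geq 0$.
   Context: For integers $N\geq k\geq0$ and $r\ge1$, the $r$-restricted Stirling number of the second kind ${N \brace k}_{\leq r}$ is $\sum \frac{N!}{\prod_{m=1}^r j_m!(m!)^{j_m}}$ over $(j_1,\dots,j_r)\in\mathbb{N}^r$ with $\sum j_m=k$, $\sum m j_m=N$; equivalently the number of partitions of an $N$-element set into $k$ nonempty blocks of size at most $r$. $v_p$ is the $p$-adic valuation on $\mathbb{Q}$ (with $v_p(0)=+\infty$). *)

From mathcomp Require Import all_boot all_order all_algebra.
Set Implicit Arguments. Unset Strict Implicit. Unset Printing Implicit Defensive.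
Import Order.TTheory GRing.Theory Num.Theory.

(* r-restricted Stirling number of the second kind {N brace k}_{<= r}:
   the number of partitions of an N-element set (here 'I_N) into k nonempty
   blocks, each of size at most r. (finset's [partition P D] already requires
   blocks to be nonempty.) *)
Definition rstirling2 (N k r : nat) : nat :=
  #|[set P : {set {set 'I_N}} |
      [&& partition P [set: 'I_N], #|P| == k & [forall B in P, #|B| <= r]]]|.

(* p-adic valuation on rat, with v_p(0) = +oo encoded as None. *)
Definition vp (p : nat) (q : rat) : option int :=
  if q == 0%R then None
  else Some ((logn p (absz (numq q)))%:Z - (logn p (absz (denq q)))%:Z)%R.

Definition vp_ge0 (p : nat) (q : rat) : bool :=
  if vp p q is Some v then (0 <= v)%R else true.

From mathcomp Require Import all_boot all_order all_algebra.
From mathcomp Require Import all_fingroup all_solvable.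

Set Implicit Arguments.
Unset Strict Implicit.
Unset Printing Implicit Defensive.

Import Order.TTheory GRing.Theory Num.Theory.

(* Labelling the blocks of a partition, k! {l brace k}_{<= i} counts the maps
   'I_l -> 'I_k whose fibers are nonempty of size at most i. The symmetric
   group S_l acts on these maps by precomposition. An element of order p in
   a stabilizer permutes every fiber, so its orbits, of size 1 or p, fit in
   fibers of size at most i < p; hence it is trivial. All stabilizers are thus
   p'-groups, every orbit size is divisible by the p-part of l!, and so is
   k! {l brace k}_{<= i}. *)

Lemma vp_ge0_fracn (p a b : nat) : prime p -> 0 < b -> ~~ (p %| b) ->
  vp_ge0 p (a%:R / b%:R : rat).
Proof.
move=> p_pr b_gt0 p_ndvd_b; rewrite /vp_ge0 /vp; case: ifP => // _.
set q : rat := (a%:R / b%:R)%R.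
have num_den : (numq q * b%:Z = a%:Z * denq q)%R.
  apply: (@intr_inj rat); rewrite !intrM numqE /q.
  have b_neq0 : ((b%:Z)%:~R : rat) != 0%R by rewrite intr_eq0 eqz_nat -lt0n.
  by rewrite !pmulrn mulrAC divfK.
have den_dvd_b : `|denq q|%N %| b.
  rewrite -(@Gauss_dvdr _ `|numq q|%N); last by rewrite coprime_sym coprime_num_den.
  by have := congr1 absz num_den; rewrite !abszM /= => ->; rewrite dvdn_mull.
have -> : logn p `|denq q|%N = 0.
  apply/eqP; rewrite -leqn0 -(@logn_coprime p b) ?prime_coprime //.
  exact: dvdn_leq_log.
by rewrite subr0.
Qed.

Lemma vp_ge0_divn (p a b : nat) : prime p -> 0 < b -> b`_p %| a ->
  vp_ge0 p (a%:R / b%:R : rat).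
Proof.
move=> p_pr b_gt0 /dvdnP[a' ->].
rewrite -{2}(partnC p b_gt0) (mulnC a') !natrM -mulf_div.
rewrite divff ?mul1r ?pnatr_eq0 -?lt0n ?part_gt0 //.
by apply: vp_ge0_fracn; rewrite ?part_gt0 // -p'natE // part_pnat.
Qed.

Lemma part_card_dvdn_acts (aT : finGroupType) (rT : finType)
    (to : {action aT &-> rT}) (G : {group aT}) (S : {set rT}) (p : nat) :
  [acts G, on S | to] -> {in S, forall x, (p^'.-group 'C_G[x | to])%g} ->
  #|G|`_p %| #|S|.
Proof.
move=> actsGS p'stab; rewrite -(acts_sum_card_orbit actsGS).
apply: dvdn_sum => _ /imsetP[x Sx ->].
have orbit_gt0 : 0 < #|orbit to G x|.
  by rewrite card_gt0; apply/set0Pn; exists x; apply: orbit_refl.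
rewrite -(card_orbit_stab to G x) partnM ?cardG_gt0 //.
by rewrite (part_p'nat (p'stab x Sx)) muln1 dvdn_part.
Qed.

Lemma porbit_prime_order (T : finType) (s : {perm T}) :
  prime #[s]%g -> exists x, #|porbit s x| = #[s]%g.
Proof.
move=> s_pr; case: (pickP (fun x => #|porbit s x| == #[s]%g)) => [x /eqP | no_full].
  by exists x.
suff s1 : s = 1%g by rewrite s1 order1 in s_pr.
apply/permP => x; rewrite perm1.
have : #|porbit s x| %| #[s]%g by rewrite porbitE dvdn_orbit.
case/primeP: s_pr => _ /[apply] /orP[/eqP orbit1 | full]; last by rewrite no_full in full.
by have := iter_porbit s x; rewrite orbit1.
Qed.

Section Labellings.

Variables l k r : nat.

Implicit Types (f g : {ffun 'I_l -> 'I_k}) (P : {set {set 'I_l}}).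

Definition fiber f (j : 'I_k) : {set 'I_l} := [set x | f x == j].

Definition blocks f : {set {set 'I_l}} := [set fiber f j | j : 'I_k].

Definition bounded_partitions : {set {set {set 'I_l}}} :=
  [set P | [&& partition P [set: 'I_l], #|P| == k & [forall B in P, #|B| <= r]]].

Definition bounded_surjections : {set {ffun 'I_l -> 'I_k}} :=
  [set f | [forall j, 0 < #|fiber f j| <= r]].

Lemma card_bounded_partitions : #|bounded_partitions| = rstirling2 l k r.
Proof. by []. Qed.

Lemma mem_fiber f x : x \in fiber f (f x).
Proof. by rewrite inE. Qed.

Lemma fiber_inj f : (forall j, fiber f j != set0) -> injective (fiber f).
Proof.
move=> nz j1 j2 fib_eq; have /set0Pn[x x_j1] := nz j1.
by move: (x_j1); rewrite fib_eq !inE => /eqP <-; move: x_j1; rewrite inE => /eqP.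
Qed.

Lemma partition_blocks f :
  partition (blocks f) [set: 'I_l] = [forall j, fiber f j != set0].
Proof.
have cover_blocks : cover (blocks f) == [set: 'I_l].
  apply/eqP/setP => x; rewrite inE; apply/bigcupP.
  by exists (fiber f (f x)); [apply: imset_f | apply: mem_fiber].
have triv_blocks : trivIset (blocks f).
  apply/trivIsetP => _ _ /imsetP[j1 _ ->] /imsetP[j2 _ ->] neq_fib.
  rewrite -setI_eq0; apply/set0Pn => -[x]; rewrite !inE => /andP[/eqP e1 /eqP e2].
  by rewrite -e1 -e2 eqxx in neq_fib.
rewrite /partition cover_blocks triv_blocks /=; apply/idP/forallP => [no_fib j | nz].
  by apply: contraNneq no_fib => <-; apply: imset_f.
by apply/imsetP => -[j _ fib0]; have := nz j; rewrite -fib0 eqxx.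
Qed.

Lemma bounded_surjectionsE f :
  (f \in bounded_surjections) = (blocks f \in bounded_partitions).
Proof.
rewrite !inE partition_blocks; apply/forallP/and3P => [bnd | [/forallP nz _ bnd] j].
  have nz j : fiber f j != set0 by rewrite -card_gt0; case/andP: (bnd j).
  split; first by apply/forallP.
    by rewrite card_imset ?card_ord //; apply: fiber_inj.
  by apply/forall_inP => _ /imsetP[j _ ->]; case/andP: (bnd j).
by rewrite card_gt0 nz (forall_inP bnd) ?imset_f.
Qed.

Definition relabel (t : {perm 'I_k}) f : {ffun 'I_l -> 'I_k} := [ffun x => t (f x)].

Lemma fiber_relabel t f j : fiber (relabel t f) j = fiber f ((t^-1)%g j).
Proof.
apply/setP => x; rewrite !inE ffunE.
by apply/eqP/eqP => [<- | ->]; rewrite ?permK ?permKV.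
Qed.

Lemma blocks_relabel t f : blocks (relabel t f) = blocks f.
Proof.
apply/setP => B; apply/imsetP/imsetP => -[j _ ->].
  by exists ((t^-1)%g j); rewrite ?fiber_relabel.
by exists (t j); rewrite ?fiber_relabel ?permK.
Qed.

Lemma relabel_inj f : (forall j, fiber f j != set0) -> injective (relabel^~ f).
Proof.
move=> nz t1 t2 eq_t; apply/permP => j; have /set0Pn[x] := nz j.
by rewrite inE => /eqP <-; have /ffunP/(_ x) := eq_t; rewrite !ffunE.
Qed.

Lemma blocks_eq_relabel f g : (forall j, fiber f j != set0) ->
  blocks g = blocks f -> exists t, g = relabel t f.
Proof.
move=> nz eq_blocks.
have /fin_all_exists[s fib_s] j : exists j', fiber f j = fiber g j'.
  have : fiber f j \in blocks g by rewrite eq_blocks imset_f.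
  by case/imsetP=> j' _ ->; exists j'.
have s_inj : injective s.
  by move=> j1 j2 eq_s; apply: fiber_inj => //; rewrite !fib_s eq_s.
exists (perm s_inj); apply/ffunP => x; rewrite ffunE permE.
by have := mem_fiber f x; rewrite fib_s inE => /eqP.
Qed.

Lemma blocks_onto P : 0 < k -> partition P [set: 'I_l] -> #|P| = k ->
  exists f, blocks f = P.
Proof.
move=> k_gt0 /and3P[/eqP coverP trivP _] cardP.
have /set0Pn[B0 PB0] : P != set0 by rewrite -card_gt0 cardP.
pose label B := cast_ord cardP (enum_rank_in PB0 B).
have label_inj : {in P &, injective label}.
  by move=> B1 B2 PB1 PB2 /cast_ord_inj/(congr1 enum_val); rewrite !enum_rankK_in.
have cover_x x : x \in cover P by rewrite coverP inE.
exists [ffun x => label (pblock P x)].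
have fiber_label B : B \in P -> fiber [ffun x => label (pblock P x)] (label B) = B.
  move=> PB; apply/setP => x; rewrite !inE ffunE.
  apply/eqP/idP => [/label_inj eqB | Bx].
    by rewrite -eqB ?pblock_mem ?mem_pblock.
  by rewrite (def_pblock trivP PB Bx).
apply/esym/eqP; rewrite eqEcard; apply/andP; split.
  by apply/subsetP => B PB; rewrite -(fiber_label B PB) imset_f.
by rewrite cardP -[X in _ <= X]card_ord leq_imset_card.
Qed.

Lemma card_blocks_eq P : 0 < k -> P \in bounded_partitions ->
  #|[set f | blocks f == P]| = k`!.
Proof.
move=> k_gt0; rewrite inE => /and3P[partP /eqP cardP _].
have [f0 blocks_f0] := blocks_onto k_gt0 partP cardP.
have nz : forall j, fiber f0 j != set0.
  by apply/forallP; rewrite -partition_blocks blocks_f0.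
have -> : [set f | blocks f == P] = [set relabel t f0 | t : {perm 'I_k}].
  apply/setP => f; rewrite inE; apply/eqP/imsetP => [|[t _ ->]]; last first.
    by rewrite blocks_relabel.
  by rewrite -blocks_f0 => /(blocks_eq_relabel nz)[t ->]; exists t.
by rewrite card_imset ?card_Sn //; apply: relabel_inj.
Qed.

Lemma card_bounded_surjections : 0 < k ->
  #|bounded_surjections| = k`! * rstirling2 l k r.
Proof.
move=> k_gt0; rewrite -card_bounded_partitions -sum1_card.
rewrite (eq_bigl (fun f => blocks f \in bounded_partitions)); last first.
  by move=> f; rewrite bounded_surjectionsE.
rewrite (partition_big blocks (mem bounded_partitions)) //=.
rewrite mulnC -sum1_card big_distrl /=.
apply: eq_bigr => P BP_P; rewrite mul1n -(card_blocks_eq k_gt0 BP_P) -sum1_card.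
by apply: eq_bigl => f; rewrite inE; case: eqP => [->|]; rewrite ?BP_P ?andbF.
Qed.

End Labellings.

Section Precomposition.

Variables l k r : nat.

Definition precomp (f : {ffun 'I_l -> 'I_k}) (s : {perm 'I_l}) : {ffun 'I_l -> 'I_k} :=
  [ffun x => f ((s^-1)%g x)].

Lemma precomp1 : precomp^~ 1%g =1 id.
Proof. by move=> f; apply/ffunP => x; rewrite ffunE invg1 perm1. Qed.

Lemma precompM f : act_morph precomp f.
Proof. by move=> s t; apply/ffunP => x; rewrite !ffunE invMg permM. Qed.

Definition precomp_action := TotalAction precomp1 precompM.

Lemma acts_bounded_surjections :
  [acts [set: {perm 'I_l}], on bounded_surjections l k r | precomp_action].
Proof.
apply/subsetP => s _; apply/astabsP => f.
have card_fiber j : #|fiber (precomp f s) j| = #|fiber f j|.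
  rewrite -(card_preimset (fiber f j) (@perm_inj _ (s^-1)%g)).
  by apply: eq_card => x; rewrite !inE ffunE.
by rewrite /= !inE; apply: eq_forallb => j; rewrite card_fiber.
Qed.

Lemma porbit_sub_fiber f s x : s \in 'C[f | precomp_action]%g ->
  porbit s x \subset fiber f (f x).
Proof.
move=> s_stab; apply/subsetP => _ /porbitP[i ->]; rewrite inE.
have /astab1P/ffunP/(_ ((s ^+ i)%g x)) := groupX i s_stab.
by rewrite /= ffunE permK => ->.
Qed.

Lemma p'group_stab_bounded_surjection p f : prime p -> r < p ->
  f \in bounded_surjections l k r ->
  (p^'.-group 'C_[set: {perm 'I_l}][f | precomp_action])%g.
Proof.
move=> p_pr r_lt_p f_bounded; rewrite /pgroup p'natE //.
apply/negP => /(Cauchy p_pr)[s /setIP[_ s_stab] ord_s].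
have [x orbit_x] : exists x, #|porbit s x| = #[s]%g.
  by apply: porbit_prime_order; rewrite ord_s.
have : #|fiber f (f x)| <= r.
  by move: f_bounded; rewrite inE => /forallP/(_ (f x))/andP[].
apply/negP; rewrite -ltnNge; apply: leq_trans r_lt_p _.
by rewrite -ord_s -orbit_x subset_leq_card ?porbit_sub_fiber.
Qed.

End Precomposition.

Theorem lemma3p13 (p i k : nat) :
  prime p -> odd p -> 1 <= i <= p.-1 -> 1 <= k ->
  forall l : nat, k <= l ->
  vp_ge0 p ((k`!)%:R / (l`!)%:R * (rstirling2 l k i)%:R : rat).
Proof.
move=> p_pr _ /andP[_ i_le] k_gt0 l _.
have i_lt_p : i < p by rewrite (leq_ltn_trans i_le) // prednK ?prime_gt0.
have fact_part_dvd : (l`!)`_p %| k`! * rstirling2 l k i.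
  rewrite -card_bounded_surjections // -card_Sn -cardsT.
  apply: part_card_dvdn_acts (acts_bounded_surjections l k i) _ => f.
  exact: p'group_stab_bounded_surjection.
by rewrite mulrAC -natrM; apply: vp_ge0_divn; rewrite ?fact_gt0.
Qed.
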